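(* Let $P$ be a labelled program and $I$ a classical model of $P$. Then $G$ is an explanation for $I$ under $P$ if and only if $G$ is an explanation for $I$ under $P^I$.
   Context: Fix a finite non-empty set $\mathit{At}$ of propositional atoms. A labelled rule $r$ has the form $\ell : p_1 \vee \dots \vee p_m \leftarrow q_1 \wedge \dots \wedge q_n \wedge \neg s_1 \wedge \dots \wedge \neg s_j \wedge \neg\neg t_1 \wedge \dots \wedge \neg\neg t_k$ with $m,n,j,k \ge 0$ and atoms in $\mathit{At}$; $\mathit{Lb}(r)=\ell$, $\mathit{Hd}(r)=p_1\vee\dots\vee p_m$, $H(r)=\{p_1,\dots,p_m\}$, $\mathit{Bd}(r)$ is the whole antecedent, $\mathit{Bd}^+(r)=q_1\wedge\dots\wedge q_n$, $B^+(r)=\{q_1,\dots,q_n\}$, $\mathit{Bd}^-(r)=\neg s_1 \wedge \dots \wedge \neg s_j \wedge \neg\neg t_1 \wedge \dots \wedge \neg\neg t_k$. Empty disjunction is $\bot$, empty conjunction $\top$. A labelled program $P$ is a finite set of labelled rules with no repeated label; $\mathit{Lb}(P)$ is its set of labels. An interpretation $I\subseteq\mathit{At}$ is a (classical) model of $P$ if $I\models \mathit{Bd}(r)\to\mathit{Hd}(r)$ for every $r\in P$. The reduct is $P^I=\{\ \mathit{Lb}(r): \mathit{Hd}(r) \leftarrow \mathit{Bd}^+(r) \mid r \in P,\ I \models \mathit{Bd}^-(r)\ \}$, itself a labelled program. $\mathit{Sup}(I,P,p)=\{ r \in P \mid p \in H(r),\ I \models \mathit{Bd}(r)\}$. A support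 graph of a model $I$ under $P$ is a directed graph $G=\langle I,E,\lambda\rangle$ with vertex set $I$, edges $E\subseteq I\times I$ and a labelling $\lambda: I\to \mathit{Lb}(P)$ such that (i) $\lambda$ is injective, and (ii) for every $p\in I$, the rule $r\in P$ with $\mathit{Lb}(r)=\lambda(p)$ satisfies $r\in \mathit{Sup}(I,P,p)$ and $B^+(r)=\{q \mid (q,p)\in E\}$. An explanation is an acyclic support graph. *)

From mathcomp Require Import all_boot.
Set Implicit Arguments. Unset Strict Implicit. Unset Printing Implicit Defensive.

Section Programs.
Variables (At : finType) (L : eqType).

(* A labelled rule  l : p1 v .. v pm <- q1 /\ .. /\ qn /\ ~s1 /\ .. /\ ~sj /\ ~~t1 /\ .. /\ ~~tk
   is represented as (l, [p..], [q..], [s..], [t..]). *)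
Definition rule : eqType := (L * seq At * seq At * seq At * seq At)%type.

Definition Lb (r : rule) : L := r.1.1.1.1.
Definition H (r : rule) : seq At := r.1.1.1.2.
Definition Bpos (r : rule) : seq At := r.1.1.2.
Definition Bneg (r : rule) : seq At := r.1.2.
Definition Bnn (r : rule) : seq At := r.2.

Definition mk_rule l h bp bn bnn : rule := (l, h, bp, bn, bnn).

Definition program := seq rule.
Definition labelled (P : program) : bool := uniq [seq Lb r | r <- P].
Definition LbP (P : program) : seq L := [seq Lb r | r <- P].

Definition sat_Hd (I : {set At}) (r : rule) : bool := has (fun p => p \in I) (H r).
Definition sat_Bdpos (I : {set At}) (r : rule) : bool := all (fun q => q \in I) (Bpos r).
Definition sat_Bdneg (I : {set At}) (r : rule) : bool :=
  all (fun s => s \notin I) (Bneg r) && all (fun t => ~~ (t \notin I)) (Bnn r).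
Definition sat_Bd (I : {set At}) (r : rule) : bool := sat_Bdpos I r && sat_Bdneg I r.

Definition is_model (I : {set At}) (P : program) : Prop :=
  forall r, r \in P -> sat_Bd I r -> sat_Hd I r.

Definition reduct (P : program) (I : {set At}) : program :=
  [seq mk_rule (Lb r) (H r) (Bpos r) [::] [::] | r <- P & sat_Bdneg I r].

Definition in_Sup (I : {set At}) (P : program) (p : At) (r : rule) : Prop :=
  r \in P /\ p \in H r /\ sat_Bd I r.

(* A graph on vertex set I: edge set E and labelling lam (only its values on I matter). *)
Record graph := Graph { gE : {set At * At}; glab : At -> L }.

Definition support_graph (I : {set At}) (P : program) (G : graph) : Prop :=
  (forall q p, (q, p) \in gE G -> q \in I /\ p \in I) /\
  (forall p, p \in I -> glab G p \in LbP P) /\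
  {in I &, injective (glab G)} /\
  (forall p, p \in I -> forall r, r \in P -> Lb r = glab G p ->
       in_Sup I P p r /\ (forall q, q \in Bpos r <-> (q, p) \in gE G)).

Definition acyclic (G : graph) : Prop :=
  ~ exists p q, ((p, q) \in gE G) /\ connect (fun x y => (x, y) \in gE G) q p.

Definition explanation (I : {set At}) (P : program) (G : graph) : Prop :=
  support_graph I P G /\ acyclic G.

End Programs.

From mathcomp Require Import all_boot.

Set Implicit Arguments.
Unset Strict Implicit.
Unset Printing Implicit Defensive.

(* Negative body literals are evaluated in I itself, so a rule of P and its
   image in P^I have the same heads, positive bodies and membership in Sup;
   only the set of available labels differs.  Every label of P^I is a label
   of P, and a label used by a support graph under P names a rule whose
   negative body holds in I, so it survives in P^I.  As labels are unique,
   "the rule labelled l" is the same rule in both programs. *)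

Lemma uniq_map_inj_in (T1 T2 : eqType) (f : T1 -> T2) (s : seq T1) :
  uniq (map f s) -> {in s &, injective f}.
Proof.
elim: s => [|a s IHs] //= /andP [fa_notin /IHs inj_s] x y.
rewrite !inE => /predU1P [-> | xs] /predU1P [-> | ys] // fxy.
- by rewrite fxy map_f in fa_notin.
- by rewrite -fxy map_f in fa_notin.
- exact: inj_s.
Qed.

Section Reduct.
Variables (At : finType) (L : eqType).
Implicit Types (P : program At L) (I : {set At}) (G : graph At L)
  (r : rule At L) (p : At) (l : L).

Definition reduct_rule r : rule At L := mk_rule (Lb r) (H r) (Bpos r) [::] [::].

Lemma mem_reduct P I r :
  r \in P -> sat_Bdneg I r -> reduct_rule r \in reduct P I.
Proof. by move=> rP rneg; apply: map_f; rewrite mem_filter rneg. Qed.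

Lemma reductP P I r' :
  reflect (exists2 r, r \in P /\ sat_Bdneg I r & r' = reduct_rule r)
          (r' \in reduct P I).
Proof.
apply: (iffP mapP) => [[r] | [r [rP rneg] ->]].
  by rewrite mem_filter => /andP [rneg rP] ->; exists r.
by exists r; rewrite // mem_filter rneg.
Qed.

Lemma in_Sup_reduct P I p r :
  r \in P -> sat_Bdneg I r ->
  in_Sup I (reduct P I) p (reduct_rule r) <-> in_Sup I P p r.
Proof.
move=> rP rneg; rewrite /in_Sup /sat_Bd rneg andbT /=.
by split=> [[_ supp] | [_ supp]]; split=> //; apply: mem_reduct.
Qed.

Lemma LbP_reduct_sub P I : {subset LbP (reduct P I) <= LbP P}.
Proof.
by move=> l /mapP [_ /reductP [r [rP _] ->] ->]; exact: map_f rP.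
Qed.

Lemma LbP_reduct_sat_Bdneg P I r :
  labelled P -> r \in P -> Lb r \in LbP (reduct P I) -> sat_Bdneg I r.
Proof.
move=> lblP rP /mapP [_ /reductP [r1 [r1P r1neg] ->] /= eq_lb].
by rewrite (uniq_map_inj_in lblP rP r1P eq_lb).
Qed.

Definition label_supports I P G p l : Prop :=
  forall r, r \in P -> Lb r = l ->
    in_Sup I P p r /\ (forall q, q \in Bpos r <-> (q, p) \in gE G).

Lemma label_supports_LbP_reduct P I G p l :
  l \in LbP P -> label_supports I P G p l -> l \in LbP (reduct P I).
Proof.
move=> /mapP [r rP ->] supp.
have [[_ [_ /andP [_ rneg]]] _] := supp r rP erefl.
by apply/mapP; exists (reduct_rule r); rewrite ?mem_reduct.
Qed.

Lemma label_supports_reduct P I G p l :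
  labelled P -> l \in LbP (reduct P I) ->
  label_supports I P G p l <-> label_supports I (reduct P I) G p l.
Proof.
move=> lblP lP.
split=> [supp _ /reductP [r [rP rneg] ->] lb_r | supp r rP lb_r].
  have [sup_r edges_r] := supp r rP lb_r.
  by split=> //; apply/(in_Sup_reduct _ rP rneg).
have rneg : sat_Bdneg I r.
  by apply: (LbP_reduct_sat_Bdneg lblP rP); rewrite lb_r.
have [sup_r edges_r] := supp _ (mem_reduct rP rneg) lb_r.
by split=> //; apply/(in_Sup_reduct _ rP rneg).
Qed.

Lemma support_graph_reduct P I G :
  labelled P -> support_graph I P G <-> support_graph I (reduct P I) G.
Proof.
move=> lblP.
split=> [[edges [lab [inj supp]]] | [edges [lab [inj supp]]]].
- have labR p : p \in I -> glab G p \in LbP (reduct P I).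
    by move=> pI; apply: label_supports_LbP_reduct (lab p pI) (supp p pI).
  split=> //; split; first exact: labR.
  split=> // p pI.
  exact: (label_supports_reduct G p lblP (labR p pI)).1 (supp p pI).
- split=> //; split; first by move=> p /lab /LbP_reduct_sub.
  split=> // p pI.
  exact: (label_supports_reduct G p lblP (lab p pI)).2 (supp p pI).
Qed.

End Reduct.

Theorem proposition3 (At : finType) (L : eqType) (At_ne : 0 < #|At|)
    (P : program At L) (HP : labelled P) (I : {set At}) (HI : is_model I P)
    (G : graph At L) :
  explanation I P G <-> explanation I (reduct P I) G.
Proof.
have supp_equiv := support_graph_reduct I G HP.
by split=> [[/supp_equiv supp acyc] | [/supp_equiv supp acyc]].
Qed.
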